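(* Let $k$ be a field and $\mathsf{E}$ a locally finite $k$-linear category. Then every $\mathsf{E}$-module (left or right) is the direct limit (directed union) of its locally finite $\mathsf{E}$-submodules.
   Context: A small $k$-linear category $\mathsf{E}$ has $k$-vector spaces $\operatorname{Hom}_\mathsf{E}(x,y)$, $k$-bilinear associative composition and identities with $\mathrm{id}_x\ne0$. A left (resp. right) $\mathsf{E}$-module is a $k$-linear functor $\mathsf{E}\to k\text{-Vect}$ (resp. $\mathsf{E}^{op}\to k\text{-Vect}$); it is locally finite if all its values are finite-dimensional. Write $x\preceq y$ if there are $n\ge1$ and objects $x=z_0,\dots,z_n=y$ with $\operatorname{Hom}_\mathsf{E}(z_{i-1},z_i)\neq0$ for all $i$. $\mathsf{E}$ is locally finite if all Hom spaces are finite-dimensional and every $\{z:x\preceq z\preceq y\}$ is finite. *)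

From HB Require Import structures.
From mathcomp Require Import all_boot all_order all_algebra.
From Stdlib Require Import Relations.
From Stdlib Require List.
Set Implicit Arguments. Unset Strict Implicit. Unset Printing Implicit Defensive.
Import GRing.Theory.
Local Open Scope ring_scope.

Definition in_span (k : fieldType) (V : lmodType k) (s : seq V) (v : V) : Prop :=
  exists c : 'I_(size s) -> k, v = \sum_(i < size s) c i *: s`_i.

(* the subset P of V (assumed a subspace) is finite-dimensional:
   it is spanned by finitely many of its elements *)
Definition fin_dim_sub (k : fieldType) (V : lmodType k) (P : V -> Prop) : Prop :=
  exists s : seq V, (forall v, v \in s -> P v) /\ (forall v, P v -> in_span s v).

Definition fin_dim (k : fieldType) (V : lmodType k) : Prop :=
  fin_dim_sub (fun _ : V => True).

Record kcat (k : fieldType) := KCat {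
  Obj : Type;
  Hom : Obj -> Obj -> lmodType k;
  comp : forall x y z, Hom y z -> Hom x y -> Hom x z;   (* comp g f = g o f *)
  idm : forall x, Hom x x;
  comp_linl : forall x y z (a : k) (g1 g2 : Hom y z) (f : Hom x y),
      comp (a *: g1 + g2) f = a *: comp g1 f + comp g2 f;
  comp_linr : forall x y z (a : k) (g : Hom y z) (f1 f2 : Hom x y),
      comp g (a *: f1 + f2) = a *: comp g f1 + comp g f2;
  comp_assoc : forall w x y z (h : Hom y z) (g : Hom x y) (f : Hom w x),
      comp h (comp g f) = comp (comp h g) f;
  comp_idl : forall x y (f : Hom x y), comp (idm y) f = f;
  comp_idr : forall x y (f : Hom x y), comp f (idm x) = f;
  idm_neq0 : forall x, idm x != 0
}.

Arguments Obj {k} _.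
Arguments Hom {k} _ _ _.
Arguments comp {k _ _ _ _}.
Arguments idm {k _}.

Section Cat.
Variables (k : fieldType) (E : kcat k).

Definition hom_nz (x y : Obj E) : Prop := exists f : Hom E x y, f != 0.

(* x <= y : chain x = z_0, ..., z_n = y with n >= 1 and nonzero Homs *)
Definition preceq : relation (Obj E) := clos_trans (Obj E) hom_nz.

Definition locally_finite_cat : Prop :=
  (forall x y, fin_dim (Hom E x y)) /\
  (forall x y, exists l : List.list (Obj E),
      forall z, preceq x z -> preceq z y -> List.In z l).

Record lmodule := LModule {
  lM : Obj E -> lmodType k;
  lact : forall x y, Hom E x y -> lM x -> lM y;
  lact_linl : forall x y (a : k) (f1 f2 : Hom E x y) (m : lM x),
      lact (a *: f1 + f2) m = a *: lact f1 m + lact f2 m;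
  lact_linr : forall x y (a : k) (f : Hom E x y) (m1 m2 : lM x),
      lact f (a *: m1 + m2) = a *: lact f m1 + lact f m2;
  lact_comp : forall x y z (g : Hom E y z) (f : Hom E x y) (m : lM x),
      lact (comp g f) m = lact g (lact f m);
  lact_id : forall x (m : lM x), lact (idm x) m = m
}.

Record rmodule := RModule {
  rM : Obj E -> lmodType k;
  ract : forall x y, Hom E x y -> rM y -> rM x;
  ract_linl : forall x y (a : k) (f1 f2 : Hom E x y) (m : rM y),
      ract (a *: f1 + f2) m = a *: ract f1 m + ract f2 m;
  ract_linr : forall x y (a : k) (f : Hom E x y) (m1 m2 : rM y),
      ract f (a *: m1 + m2) = a *: ract f m1 + ract f m2;
  ract_comp : forall x y z (g : Hom E y z) (f : Hom E x y) (m : rM z),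
      ract (comp g f) m = ract f (ract g m);
  ract_id : forall x (m : rM x), ract (idm x) m = m
}.

Definition subspace_fam (V : Obj E -> lmodType k) (N : forall x, V x -> Prop) :=
  forall x, N x 0 /\ (forall u v, N x u -> N x v -> N x (u + v)) /\
            (forall (a : k) v, N x v -> N x (a *: v)).

Definition is_lsubmodule (M : lmodule) (N : forall x, lM M x -> Prop) : Prop :=
  subspace_fam N /\
  forall x y (f : Hom E x y) m, N x m -> N y (lact f m).

Definition is_rsubmodule (M : rmodule) (N : forall x, rM M x -> Prop) : Prop :=
  subspace_fam N /\
  forall x y (f : Hom E x y) m, N y m -> N x (ract f m).

Definition lf_lsub (M : lmodule) (N : forall x, lM M x -> Prop) : Prop :=
  is_lsubmodule N /\ forall x, fin_dim_sub (N x).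

Definition lf_rsub (M : rmodule) (N : forall x, rM M x -> Prop) : Prop :=
  is_rsubmodule N /\ forall x, fin_dim_sub (N x).

End Cat.

Arguments lf_lsub {k E} M N.
Arguments lf_rsub {k E} M N.
Arguments lM {k E} _ _.
Arguments rM {k E} _ _.

(* An element m of M x lies in the submodule y |-> E(x, y) . m that it
   generates, which is locally finite because each of its values is a linear
   image of the finite-dimensional space E(x, y); and the sum of two locally
   finite submodules is again locally finite.  So the locally finite
   submodules form a directed family covering M.  Right E-modules are left
   modules over the opposite category, which has the same Hom spaces. *)
From HB Require Import structures.
From Pilot Require Import Defs.
From mathcomp Require Import all_boot all_order all_algebra.
Set Implicit Arguments. Unset Strict Implicit. Unset Printing Implicit Defensive.
Import GRing.Theory.
Local Open Scope ring_scope.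

Section Span.
Variable k : fieldType.

Definition is_subspace (V : lmodType k) (P : V -> Prop) : Prop :=
  P 0 /\ (forall u v, P u -> P v -> P (u + v)) /\ (forall a v, P v -> P (a *: v)).

Definition image_of (U V : lmodType k) (F : U -> V) (v : V) : Prop :=
  exists u, v = F u.

Definition subspace_add (V : lmodType k) (P Q : V -> Prop) (v : V) : Prop :=
  exists u w, P u /\ Q w /\ v = u + w.

Lemma in_spanP (V : lmodType k) (s : seq V) v :
  in_span s v <-> exists c : nat -> k, v = \sum_(i < size s) c i *: s`_i.
Proof.
split; last by case=> c ->; exists (fun i => c i).
case=> c ->; exists (fun j => oapp c 0 (insub j)).
by apply: eq_bigr => i _; rewrite valK.
Qed.

Lemma in_span_cat (V : lmodType k) (s1 s2 : seq V) u w :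
  in_span s1 u -> in_span s2 w -> in_span (s1 ++ s2) (u + w).
Proof.
move=> /in_spanP [c1 ->] /in_spanP [c2 ->]; apply/in_spanP.
exists (fun j => if j < size s1 then c1 j else c2 (j - size s1))%N.
rewrite size_cat big_split_ord /=; congr (_ + _); apply: eq_bigr => i _.
  by rewrite nth_cat ltn_ord.
by rewrite nth_cat ltnNge leq_addr /= addKn.
Qed.

Section LinearImage.
Variables (U V : lmodType k) (F : U -> V).
Hypothesis F_linear : linear F.

HB.instance Definition _ := GRing.isLinear.Build k U V *:%R F F_linear.

Lemma in_span_map (s : seq U) u : in_span s u -> in_span (map F s) (F u).
Proof.
move=> /in_spanP [c ->]; apply/in_spanP; exists c.
rewrite linear_sum size_map.
by apply: eq_bigr => i _; rewrite linearZ (nth_map 0).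
Qed.

Lemma image_subspace : is_subspace (image_of F).
Proof.
split; first by exists 0; rewrite linear0.
split; first by move=> _ _ [u ->] [w ->]; exists (u + w); rewrite linearD.
by move=> a _ [u ->]; exists (a *: u); rewrite linearZ.
Qed.

Lemma fin_dim_image : fin_dim U -> fin_dim_sub (image_of F).
Proof.
move=> [s [_ s_span]]; exists (map F s); split.
  by move=> _ /mapP [u _ ->]; exists u.
by move=> _ [u ->]; apply: in_span_map; exact: s_span.
Qed.

End LinearImage.

Lemma subspace_add_subspace (V : lmodType k) (P Q : V -> Prop) :
  is_subspace P -> is_subspace Q -> is_subspace (subspace_add P Q).
Proof.
move=> [P0 [PD PZ]] [Q0 [QD QZ]]; split; first by exists 0, 0; rewrite addr0.
split=> [_ _ [u1 [w1 [Pu1 [Qw1 ->]]]] [u2 [w2 [Pu2 [Qw2 ->]]]] |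
         a _ [u [w [Pu [Qw ->]]]]].
  exists (u1 + u2), (w1 + w2); rewrite addrACA.
  by split; [exact: PD | split; [exact: QD|]].
exists (a *: u), (a *: w); rewrite scalerDr.
by split; [exact: PZ | split; [exact: QZ|]].
Qed.

Lemma subspace_addl (V : lmodType k) (P Q : V -> Prop) v :
  Q 0 -> P v -> subspace_add P Q v.
Proof. by move=> Q0 Pv; exists v, 0; rewrite addr0. Qed.

Lemma subspace_addr (V : lmodType k) (P Q : V -> Prop) v :
  P 0 -> Q v -> subspace_add P Q v.
Proof. by move=> P0 Qv; exists 0, v; rewrite add0r. Qed.

Lemma fin_dim_add (V : lmodType k) (P Q : V -> Prop) :
  P 0 -> Q 0 -> fin_dim_sub P -> fin_dim_sub Q -> fin_dim_sub (subspace_add P Q).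
Proof.
move=> P0 Q0 [s1 [s1P s1_span]] [s2 [s2Q s2_span]]; exists (s1 ++ s2); split.
  move=> v; rewrite mem_cat => /orP [/s1P | /s2Q].
    exact: subspace_addl.
  exact: subspace_addr.
by move=> _ [u [w [Pu [Qw ->]]]]; apply: in_span_cat; [exact: s1_span | exact: s2_span].
Qed.

End Span.

(* [Defs.] disambiguates from vector.v's [Hom] and ssrfun's [comp]. *)
HB.instance Definition _ (k : fieldType) (E : kcat k) (M : lmodule E) x y
    (f : Defs.Hom E x y) :=
  GRing.isLinear.Build k (lM M x) (lM M y) *:%R (lact f) (fun a => lact_linr a f).

Section LeftModules.
Variables (k : fieldType) (E : kcat k) (M : lmodule E).

Definition lsub_add (N1 N2 : forall x, lM M x -> Prop) x (v : lM M x) : Prop :=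
  subspace_add (N1 x) (N2 x) v.

Definition lsub_gen x (m : lM M x) y (v : lM M y) : Prop :=
  image_of (fun f : Defs.Hom E x y => lact f m) v.
Arguments lsub_gen {x} m y v.

Lemma lf_lsub_add N1 N2 :
  lf_lsub M N1 -> lf_lsub M N2 -> lf_lsub M (lsub_add N1 N2).
Proof.
move=> [[N1_sub N1_stable] N1_fd] [[N2_sub N2_stable] N2_fd].
split=> [|x]; last exact: fin_dim_add (N1_sub x).1 (N2_sub x).1 (N1_fd x) (N2_fd x).
split=> [x | x y f _ [u [w [N1u [N2w ->]]]]]; first exact: subspace_add_subspace.
exists (lact f u), (lact f w); rewrite linearD.
by split; [exact: N1_stable | split; [exact: N2_stable|]].
Qed.

Lemma lf_lsub_gen x (m : lM M x) :
  (forall y, fin_dim (Defs.Hom E x y)) -> lf_lsub M (lsub_gen m).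
Proof.
have act_linear y : linear (fun f : Defs.Hom E x y => lact f m).
  by move=> a f1 f2; exact: lact_linl.
move=> hom_fd; split=> [|y]; last exact: fin_dim_image.
split=> [y | y z g _ [f ->]]; first exact: image_subspace.
by exists (Defs.comp g f); rewrite lact_comp.
Qed.

Lemma lsub_gen_self x (m : lM M x) : lsub_gen m x m.
Proof. by exists (Defs.idm x); rewrite lact_id. Qed.

Theorem lf_lsub_directed_cover :
  (forall x y, fin_dim (Defs.Hom E x y)) ->
  (forall N1 N2, lf_lsub M N1 -> lf_lsub M N2 ->
     exists N3, lf_lsub M N3 /\
       (forall x m, N1 x m -> N3 x m) /\ (forall x m, N2 x m -> N3 x m)) /\
  (forall x (m : lM M x), exists N, lf_lsub M N /\ N x m).
Proof.
move=> hom_fd; split=> [N1 N2 N1_lf N2_lf | x m].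
  exists (lsub_add N1 N2); split; first exact: lf_lsub_add.
  have [[N1_sub _] _] := N1_lf; have [[N2_sub _] _] := N2_lf.
  split=> x m; first by apply: subspace_addl; exact: (N2_sub x).1.
  by apply: subspace_addr; exact: (N1_sub x).1.
by exists (lsub_gen m); split; [exact: lf_lsub_gen | exact: lsub_gen_self].
Qed.

End LeftModules.

Section Opposite.
Variables (k : fieldType) (E : kcat k).

Definition kcat_op : kcat k.
Proof.
refine (@KCat k (Obj E) (fun x y => Defs.Hom E y x)
  (fun x y z g f => Defs.comp f g) (@Defs.idm k E) _ _ _ _ _ (@idm_neq0 k E)).
- by move=> x y z a g1 g2 f; exact: comp_linr.
- by move=> x y z a g f1 f2; exact: comp_linl.
- by move=> w x y z h g f; rewrite comp_assoc.
- by move=> x y f; exact: comp_idr.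
- by move=> x y f; exact: comp_idl.
Defined.

Definition rmodule_op (M : rmodule E) : lmodule kcat_op :=
  @LModule k kcat_op (rM M) (fun x y (f : Defs.Hom E y x) => ract (r := M) f)
    (fun x y => @ract_linl k E M y x) (fun x y => @ract_linr k E M y x)
    (fun x y z g f => @ract_comp k E M z y x f g) (@ract_id k E M).

Lemma lf_rsub_op (M : rmodule E) N : lf_rsub M N <-> lf_lsub (rmodule_op M) N.
Proof.
by split=> [[[N_sub N_stable] N_fd] | [[N_sub N_stable] N_fd]];
  split=> //; split=> // x y f m; exact: N_stable.
Qed.

End Opposite.

Theorem lemma6p6 (k : fieldType) (E : kcat k) :
  locally_finite_cat E ->
  (forall M : lmodule E,
     (forall N1 N2, lf_lsub M N1 -> lf_lsub M N2 ->
        exists N3, lf_lsub M N3 /\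
          (forall x m, N1 x m -> N3 x m) /\ (forall x m, N2 x m -> N3 x m)) /\
     (forall x (m : lM M x), exists N, lf_lsub M N /\ N x m)) /\
  (forall M : rmodule E,
     (forall N1 N2, lf_rsub M N1 -> lf_rsub M N2 ->
        exists N3, lf_rsub M N3 /\
          (forall x m, N1 x m -> N3 x m) /\ (forall x m, N2 x m -> N3 x m)) /\
     (forall x (m : rM M x), exists N, lf_rsub M N /\ N x m)).
Proof.
move=> [hom_fd _]; split=> M; first exact: lf_lsub_directed_cover.
have [directed cover] := lf_lsub_directed_cover (rmodule_op M) (fun x y => hom_fd y x).
split=> [N1 N2 /lf_rsub_op N1_lf /lf_rsub_op N2_lf | x m].
  by have [N3 [/lf_rsub_op N3_lf N3_sup]] := directed N1 N2 N1_lf N2_lf; exists N3.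
by have [N [/lf_rsub_op N_lf Nm]] := cover x m; exists N.
Qed.
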